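(* Fix integers $m\ge d\ge1$, $\lambda=d/m$, and $\sigma>0$. Let $p_1,p_2,\dots$ be monic polynomials of degree $d$, $p_i(x)=\prod_{j=1}^d(x-r_{i,j}^2)$ with $r_{i,j}$ real, such that $\frac1d\sum_j r_{i,j}^2\le\sigma^2$ for all $i$. For $N\ge1$ let $P_N=p_1\boxplus_{d,\lambda}\cdots\boxplus_{d,\lambda}p_N$ and let $\widetilde P_N$ be the monic polynomial of degree $2d$ whose roots are the roots of $\mathbb{S}P_N$ multiplied by $1/N$. Then $\widetilde P_N\to x^{2d}$ (coefficientwise) as $N\to\infty$.
   Context: $(p\boxplus_{d,\lambda}q)(x)=\sum_{k=0}^dx^{d-k}(-1)^k\sum_{i+j=k}\frac{(d-i)!(d-j)!}{d!(d-k)!}\frac{(m-i)!(m-j)!}{m!(m-k)!}a_ib_j$ for $p=\sum(-1)^ia_ix^{d-i}$, $q=\sum(-1)^ib_ix^{d-i}$; this operation is associative, bilinear and preserves monic polynomials with nonnegative real roots. $\mathbb{S}P(x)=P(x^2)$. *)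

From HB Require Import structures.
From mathcomp Require Import all_boot all_order all_algebra.
From mathcomp Require Import all_classical all_reals all_analysis.
Set Implicit Arguments. Unset Strict Implicit. Unset Printing Implicit Defensive.
Import Order.TTheory GRing.Theory Num.Theory.
Local Open Scope ring_scope.

Section RectConv.
Variable R : realType.

(* a_i of p = sum (-1)^i a_i x^(d-i), i.e. a_i = (-1)^i p_(d-i) *)
Definition rcoef (d : nat) (p : {poly R}) (i : nat) : R :=
  (-1) ^+ i * p`_(d - i).

Definition rweight (d m i j : nat) : R :=
  ((d - i)`!%:R * (d - j)`!%:R / (d`!%:R * (d - (i + j))`!%:R)) *
  ((m - i)`!%:R * (m - j)`!%:R / (m`!%:R * (m - (i + j))`!%:R)).

Definition rconv (d m : nat) (p q : {poly R}) : {poly R} :=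
  \sum_(k < d.+1)
     ((-1) ^+ k * \sum_(i < k.+1) rweight d m i (k - i)
                     * rcoef d p i * rcoef d q (k - i)) *: 'X^(d - k).

(* P_{n+1} = p_0 ⊞ p_1 ⊞ ... ⊞ p_n  (left-nested) *)
Fixpoint rconv_iter (d m : nat) (p : nat -> {poly R}) (n : nat) : {poly R} :=
  match n with
  | 0 => p 0%N
  | n'.+1 => rconv d m (rconv_iter d m p n') (p n)
  end.

Definition polyS (P : {poly R}) : {poly R} := P \Po 'X^2.

(* monic polynomial of degree deg whose roots are those of the monic Q
   (of degree deg) multiplied by 1/N:  N^(-deg) Q(N x) *)
Definition root_scale (deg N : nat) (Q : {poly R}) : {poly R} :=
  (N%:R ^- deg) *: (Q \Po (N%:R *: 'X)).

End RectConv.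

From HB Require Import structures.
From mathcomp Require Import all_boot all_order all_algebra.
From mathcomp Require Import all_classical all_reals all_analysis.
From mathcomp Require Import zify ring.
Import Order.TTheory GRing.Theory Num.Theory.
Import numFieldNormedType.Exports.
Local Open Scope ring_scope.
Local Open Scope classical_set_scope.

(* Write a_i(P) := rcoef d P i for the signed coefficients of P.  The weights
   of the convolution lie in [0, 1], so |a_i(P)| <= a^i and |a_i(q)| <= b^i for
   all i give |a_i(P (+) q)| <= sum_j a^j b^(i-j) <= (a + b)^i.  The variance
   hypothesis bounds the roots of every p_t uniformly, hence |a_i(p_t)| <= b^i
   for a single b, and by induction |a_i(P_N)| <= (N b)^i.  In the rescaled
   polynomial the coefficient of x^(2d-2i) is +-N^(-2i) a_i(P_N), of size at
   most (b/N)^i, which tends to 0 for i >= 1; the leading coefficient stays 1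
   and the odd ones vanish. *)

Lemma fact_subnD_le n i j : (i + j <= n)%N ->
  ((n - i)`! * (n - j)`! <= n`! * (n - (i + j))`!)%N.
Proof.
move=> le_ijn.
rewrite -(bin_fact (_ : j <= n - i)%N); last by lia.
rewrite -(bin_fact (_ : j <= n)%N); last by lia.
rewrite subnDA !mulnA [X in (_ <= X)%N]mulnAC !leq_mul2r.
by rewrite leq_bin2l ?leq_subr ?orbT.
Qed.

Section RectConv.
Set Implicit Arguments.
Unset Strict Implicit.
Variable R : realType.
Implicit Types (P q : {poly R}) (p : nat -> {poly R}) (a b M : R).

Lemma rcoef0 d P : rcoef d P 0 = P`_d.
Proof. by rewrite /rcoef expr0 mul1r subn0. Qed.

Lemma norm_rcoef d P i : `|rcoef d P i| = `|P`_(d - i)|.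
Proof. by rewrite /rcoef normrM normrX normrN normr1 expr1n mul1r. Qed.

Lemma sum_expr_le_exprD a b i : 0 <= a -> 0 <= b ->
  \sum_(j < i.+1) a ^+ j * b ^+ (i - j) <= (a + b) ^+ i.
Proof.
move=> a_ge0 b_ge0; rewrite addrC exprDn; apply: ler_sum => j _.
rewrite mulrC -mulr_natr ler_peMr ?mulr_ge0 ?exprn_ge0 //.
by rewrite ler1n bin_gt0 -ltnS.
Qed.

Section Convolution.
Variables (d m : nat).

Lemma rcoef_rconv P q k : (k <= d)%N ->
  rcoef d (rconv d m P q) k =
  \sum_(i < k.+1) rweight R d m i (k - i) * rcoef d P i * rcoef d q (k - i).
Proof.
move=> le_kd; rewrite /rcoef /rconv coef_sum.
under eq_bigr => j _ do rewrite coefZ coefXn.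
rewrite (bigD1 (Ordinal (_ : k < d.+1)%N)) //= eqxx mulr1.
rewrite [X in _ + X]big1 ?addr0; first by rewrite mulrA -exprD -signr_odd oddD addbb mul1r.
move=> j /eqP ne_jk; have -> : ((d - k)%N == (d - j)%N) = false.
  apply/negbTE/eqP => eq_djk; apply: ne_jk; apply/val_inj => /=; have := ltn_ord j; lia.
by rewrite mulr0.
Qed.

Lemma size_rconv_le P q : (size (rconv d m P q) <= d.+1)%N.
Proof.
apply/leq_sizeP => j lt_dj; rewrite coef_sum big1 // => k _.
by rewrite coefZ coefXn (_ : (j == d - k)%N = false) ?mulr0 //; apply/negbTE; lia.
Qed.

Lemma lead_rconv P q : (rconv d m P q)`_d = P`_d * q`_d.
Proof.
rewrite -rcoef0 rcoef_rconv // big_ord1 subnn !rcoef0.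
by rewrite /rweight !subn0 !divff ?mulr1 ?mul1r // mulf_neq0 ?pnatr_eq0 ?fact_gt0 // -lt0n fact_gt0.
Qed.

Lemma size_rconv_iter_le p : (forall t, size (p t) <= d.+1)%N ->
  forall n, (size (rconv_iter d m p n) <= d.+1)%N.
Proof. by move=> p_size [|n] //=; apply: size_rconv_le. Qed.

Lemma lead_rconv_iter p : (forall t, (p t)`_d = 1) ->
  forall n, (rconv_iter d m p n)`_d = 1.
Proof. by move=> p_lead; elim=> [|n IHn] //=; rewrite lead_rconv IHn p_lead mulr1. Qed.

Hypothesis le_dm : (d <= m)%N.

Lemma rweight_le1 i j : (i + j <= d)%N -> `|rweight R d m i j| <= 1.
Proof.
move=> le_ijd; have le_ijm : (i + j <= m)%N by lia.
have frac_le1 n : (i + j <= n)%N ->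
    0 <= ((n - i)`!%:R * (n - j)`!%:R / (n`!%:R * (n - (i + j))`!%:R) : R) <= 1.
  move=> le_ijn; rewrite -!natrM divr_ge0 ?ler0n //=.
  rewrite ler_pdivrMr ?ltr0n ?muln_gt0 ?fact_gt0 // mul1r ler_nat.
  exact: fact_subnD_le.
have /andP[d_ge0 d_le1] := frac_le1 _ le_ijd.
have /andP[m_ge0 m_le1] := frac_le1 _ le_ijm.
rewrite ger0_norm ?mulr_ge0 //.
by rewrite -[1]mulr1 ler_pM.
Qed.

Lemma norm_rcoef_rconv_le P q a b : 0 <= a -> 0 <= b ->
  (forall i, (i <= d)%N -> `|rcoef d P i| <= a ^+ i) ->
  (forall i, (i <= d)%N -> `|rcoef d q i| <= b ^+ i) ->
  forall i, (i <= d)%N -> `|rcoef d (rconv d m P q) i| <= (a + b) ^+ i.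
Proof.
move=> a_ge0 b_ge0 P_le q_le i le_id; rewrite rcoef_rconv //.
apply: le_trans (ler_norm_sum _ _ _) _; apply: le_trans _ (sum_expr_le_exprD i a_ge0 b_ge0).
apply: ler_sum => -[j /= lt_ji] _; have le_ji : (j <= i)%N by rewrite -ltnS.
rewrite normrM normrM -[_ ^+ j]mul1r.
rewrite ler_pM ?mulr_ge0 ?q_le //; last by lia.
by rewrite ler_pM ?P_le ?rweight_le1 //; lia.
Qed.

Lemma norm_rcoef_rconv_iter_le p b : 0 <= b ->
  (forall t i, (i <= d)%N -> `|rcoef d (p t) i| <= b ^+ i) ->
  forall n i, (i <= d)%N -> `|rcoef d (rconv_iter d m p n) i| <= (b *+ n.+1) ^+ i.
Proof.
move=> b_ge0 p_le; elim=> [|n IHn] /=; first exact: p_le.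
rewrite mulrSr; apply: norm_rcoef_rconv_le => //; [exact: mulrn_wge0 | exact: p_le].
Qed.

End Convolution.

Lemma size_prod_XsubC_ord n (c : 'I_n -> R) :
  size (\prod_(j < n) ('X - (c j)%:P)) = n.+1.
Proof. by rewrite size_prod_XsubC /index_enum unlock -enumT size_enum_ord. Qed.

Lemma norm_coef_prod_XsubC_le n (c : 'I_n -> R) M : 0 <= M ->
  (forall j, `|c j| <= M) ->
  forall l, `|(\prod_(j < n) ('X - (c j)%:P))`_l| <= (1 + M) ^+ n.
Proof.
move=> M_ge0; elim: n c => [|n IHn] c c_le l.
  by rewrite big_ord0 coef1 expr0; case: (l == 0%N); rewrite ?normr1 ?normr0.
rewrite big_ord_recr /= mulrBr coefB coefMX coefMC exprSr mulrDr mulr1.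
have IHc := IHn (fun j => c (widen_ord (leqnSn n) j)) (fun j => c_le _).
apply: le_trans (ler_normB _ _) _; apply: lerD.
  by case: (l == 0%N); rewrite ?normr0 ?exprn_ge0 ?addr_ge0 ?IHc.
by rewrite normrM ler_pM.
Qed.

Lemma lead_prod_XsubC_ord n (c : 'I_n -> R) :
  (\prod_(j < n) ('X - (c j)%:P))`_n = 1.
Proof.
have := lead_coef_prod_XsubC (index_enum 'I_n) xpredT c.
by rewrite lead_coefE size_prod_XsubC_ord.
Qed.

Lemma norm_rcoef_prod_XsubC_le n (c : 'I_n -> R) M : 0 <= M ->
  (forall j, `|c j| <= M) ->
  forall i, `|rcoef n (\prod_(j < n) ('X - (c j)%:P)) i| <= ((1 + M) ^+ n) ^+ i.
Proof.
move=> M_ge0 c_le [|i].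
  by rewrite rcoef0 lead_prod_XsubC_ord normr1 expr0.
rewrite norm_rcoef; apply: le_trans (norm_coef_prod_XsubC_le M_ge0 c_le _) _.
by rewrite ler_eXnr // exprn_ege1 // lerDl.
Qed.

Lemma coef_comp_scaleX (q : {poly R}) a k : (q \Po (a *: 'X))`_k = a ^+ k * q`_k.
Proof.
rewrite comp_polyE; under eq_bigr do rewrite exprZn scalerA.
rewrite coef_sumMXn.
rewrite (big_ord1_eq _ (fun i => q`_i * a ^+ i)) mulrC; case: ltnP => // le_qk.
by rewrite nth_default ?mulr0.
Qed.

Lemma coef_root_scale_polyS deg N (Q : {poly R}) k :
  (root_scale deg N (polyS Q))`_k =
  N%:R ^- deg * N%:R ^+ k * (if (2 %| k)%N then Q`_(k %/ 2) else 0).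
Proof. by rewrite /root_scale /polyS coefZ coef_comp_scaleX coef_comp_poly_Xn ?mulrA. Qed.

Lemma cvg0_le_harmonic (u : R ^nat) C :
  (forall n, `|u n| <= C * n.+1%:R^-1) -> u @ \oo --> 0.
Proof.
move=> u_le; have C_harmonic : (fun n => C * n.+1%:R^-1) @ \oo --> 0.
  by rewrite -(mulr0 C); apply: cvgMl_tmp; apply: cvg_harmonic.
apply: (@squeeze_cvgr _ _ _ _ (fun n => - (C * n.+1%:R^-1)) (fun n => C * n.+1%:R^-1)).
- by apply: nearW => n; rewrite -ler_norml.
- by rewrite -oppr0; apply: cvgN.
- exact: C_harmonic.
Qed.

Lemma norm_scaled_coef_le (x b c : R) j i : 1 <= x -> 0 <= b -> (0 < i)%N ->
  `|c| <= (b * x) ^+ i -> `|x ^- (2 * (j + i)) * x ^+ (j * 2) * c| <= b ^+ i * x^-1.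
Proof.
move=> x_ge1 b_ge0 i_gt0 c_le; have x_gt0 : 0 < x by apply: lt_le_trans x_ge1.
have y_gt0 : 0 < x ^+ i by rewrite exprn_gt0.
have yV_ge0 : 0 <= (x ^+ i)^-1 by rewrite invr_ge0 ltW.
have -> : x ^- (2 * (j + i)) * x ^+ (j * 2) = (x ^+ i)^-1 * (x ^+ i)^-1.
  rewrite mulnDr exprD [(2 * j)%N]mulnC [(2 * i)%N]mulnC exprM [x ^+ (i * 2)]exprM.
  by field; rewrite !expf_neq0 ?gt_eqF.
rewrite normrM ger0_norm ?mulr_ge0 //.
apply: le_trans (ler_wpM2l (mulr_ge0 yV_ge0 yV_ge0) c_le) _.
have -> : (x ^+ i)^-1 * (x ^+ i)^-1 * (b * x) ^+ i = b ^+ i * (x ^+ i)^-1.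
  by rewrite exprMn; field; rewrite gt_eqF.
rewrite ler_wpM2l ?exprn_ge0 // lef_pV2 ?posrE //.
exact: ler_eXnr.
Qed.

Lemma root_scale_polyS_cvg d (Q : nat -> {poly R}) b : 0 <= b ->
  (forall n, size (Q n) <= d.+1)%N -> (forall n, (Q n)`_d = 1) ->
  (forall n i, (i <= d)%N -> `|rcoef d (Q n) i| <= (b *+ n.+1) ^+ i) ->
  forall k, (fun n => (root_scale (2 * d) n.+1 (polyS (Q n)))`_k) @ \oo -->
            ('X^(2 * d) : {poly R})`_k.
Proof.
move=> b_ge0 Q_size Q_lead Q_le k; rewrite coefXn.
have [/dvdnP[j ->]|odd_k] := boolP (2 %| k)%N; last first.
  rewrite (_ : (k == 2 * d)%N = false); last by apply: contraNF odd_k => /eqP ->; apply: dvdn_mulr.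
  apply: cvg_near_cst; apply: nearW => n.
  by rewrite coef_root_scale_polyS (negbTE odd_k) mulr0.
have coef_j n : (root_scale (2 * d) n.+1 (polyS (Q n)))`_(j * 2) =
    n.+1%:R ^- (2 * d) * n.+1%:R ^+ (j * 2) * (Q n)`_j.
  by rewrite coef_root_scale_polyS dvdn_mull // mulnK.
have [lt_jd|lt_dj|eq_jd] := ltngtP j d.
- rewrite (_ : (j * 2 == 2 * d)%N = false); last by apply/negbTE; lia.
  apply: (@cvg0_le_harmonic _ (b ^+ (d - j))) => n; rewrite coef_j.
  have -> : (2 * d = 2 * (j + (d - j)))%N by lia.
  apply: norm_scaled_coef_le; rewrite ?ler1n ?subn_gt0 //.
  rewrite mulr_natr; have := Q_le n (d - j)%N (leq_subr _ _).
  by rewrite norm_rcoef subKn // ltnW.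
- rewrite (_ : (j * 2 == 2 * d)%N = false); last by apply/negbTE; lia.
  apply: cvg_near_cst; apply: nearW => n.
  by rewrite coef_j nth_default ?mulr0 ?(leq_trans (Q_size _)).
- subst j; apply: cvg_near_cst; apply: nearW => n.
  by rewrite coef_j Q_lead mulr1 mulnC eqxx mulVf ?expf_neq0 ?pnatr_eq0.
Qed.

End RectConv.

Theorem mainTheorem7 (R : realType) (d m : nat) (sigma : R)
  (p : nat -> {poly R}) (r : nat -> 'I_d -> R) :
  (1 <= d)%N -> (d <= m)%N -> 0 < sigma ->
  (forall i, p i = \prod_(j < d) ('X - (r i j ^+ 2)%:P)) ->
  (forall i, d%:R^-1 * \sum_(j < d) r i j ^+ 2 <= sigma ^+ 2) ->
  forall k : nat,
    (fun n : nat =>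
       (root_scale (2 * d) n.+1 (polyS (rconv_iter d m p n)))`_k)
      @ \oo --> ('X^(2 * d) : {poly R})`_k.
Proof.
move=> d_ge1 le_dm _ p_def r_mean k.
set M := d%:R * sigma ^+ 2.
have M_ge0 : 0 <= M by rewrite mulr_ge0 ?ler0n ?sqr_ge0.
have r_le t j : `|r t j ^+ 2| <= M.
  rewrite ger0_norm ?sqr_ge0 // /M mulrC -ler_pdivrMr ?ltr0n // mulrC.
  apply: le_trans (r_mean t); rewrite ler_wpM2l ?invr_ge0 ?ler0n //.
  by rewrite (bigD1 j) //= lerDl sumr_ge0 // => i _; apply: sqr_ge0.
apply: (root_scale_polyS_cvg (b := (1 + M) ^+ d)).
- by rewrite exprn_ge0 // addr_ge0.
- by apply: size_rconv_iter_le => t; rewrite p_def size_prod_XsubC_ord.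
- by apply: lead_rconv_iter => t; rewrite p_def lead_prod_XsubC_ord.
- apply: (norm_rcoef_rconv_iter_le le_dm) => // [|t i _]; first by rewrite exprn_ge0 // addr_ge0.
  by rewrite p_def; apply: norm_rcoef_prod_XsubC_le.
Qed.
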